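(* Let $k\ge 2$ be an integer that is not a prime power. Then there are infinitely many integers $m$ such that $\mathcal F_k^{(m)}$ contains a vertex of level $m$ that is isolated in $\mathcal F_k^{(m)}$.
   Context: The vertex set $V$ consists of all reduced fractions $p/q$ with $p,q\in\mathbb Z$, $\gcd(p,q)=1$, together with $1/0$; here $p/q$ and $(-p)/(-q)$ denote the same vertex. For vertices define $d(p/q,a/b)=|pb-qa|$. The graph $\mathcal F_k$ has vertex set $V$, with an edge between $p/q$ and $a/b$ exactly when $d(p/q,a/b)=k$. The level of a vertex $p/q$ is $\max\{|p|,|q|\}$. For $m\in\mathbb N$, $\mathcal F_k^{(m)}$ is the subgraph of $\mathcal F_k$ induced on the vertices of level at most $m$. A prime power means $p^\ell$ with $p$ prime and $\ell>0$. *)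

From mathcomp Require Import all_boot all_order all_algebra.
Set Implicit Arguments. Unset Strict Implicit. Unset Printing Implicit Defensive.
Import Order.TTheory GRing.Theory Num.Theory.
Local Open Scope ring_scope.

(* A vertex p/q is represented by a pair (p, q) of coprime integers.
   The pairs (p,q) and (-p,-q) denote the same vertex; all notions below
   (d, level) are invariant under this sign change, so working with pairs
   is harmless. 1/0 is the pair (1,0) (or (-1,0)). *)
Definition is_vertex (v : int * int) : bool := gcdz v.1 v.2 == 1.

Definition level (v : int * int) : nat := maxn (absz v.1) (absz v.2).

Definition fdist (v w : int * int) : nat := absz (v.1 * w.2 - v.2 * w.1)%R.

Definition isolated_in_Fkm (k m : nat) (v : int * int) : Prop :=
  forall w : int * int, is_vertex w -> (level w <= m)%N -> fdist v w <> k.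

Definition prime_power (k : nat) : Prop :=
  exists p l : nat, prime p /\ (0 < l)%N /\ k = (p ^ l)%N.

(* Write k = a b with a, b > 1 coprime, and take m = a + b s with s > 0 and the
   vertex m/(-b), of level m.  A neighbour x/y would satisfy m y + b x = +-ab.
   Reducing modulo b and modulo a gives y = b v and x + s y = a u with
   u + v = +-1; primitivity of x/y excludes u = 0 and v = 0, so u and v have
   opposite signs and one of them has absolute value at least 2, whence
   |x| = a|u| + b s|v| > m. *)

From mathcomp Require Import all_boot all_order all_algebra.
From mathcomp Require Import zify ring.
Import GRing.Theory Num.Theory.
Local Open Scope ring_scope.

Lemma coprime_factors_of_non_prime_power (k : nat) :
  (1 < k)%N -> ~ prime_power k ->
  exists a b : nat, [/\ (1 < a)%N, (1 < b)%N, coprime a b & k = (a * b)%N].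
Proof.
move=> k_gt1 not_pp.
have k_gt0 : (0 < k)%N by apply: ltnW.
have p_pr := pdiv_prime k_gt1; set p := pdiv k in p_pr *.
have [b cop_pb kE] := pfactor_coprime p_pr k_gt0.
have l_gt0 : (0 < logn p k)%N by rewrite logn_gt0 mem_primes p_pr k_gt0 pdiv_dvd.
exists (p ^ logn p k)%N, b; split.
- by rewrite -(expn0 p) ltn_exp2l ?prime_gt1.
- have b_gt0 : (0 < b)%N by move: k_gt0; rewrite kE muln_gt0 => /andP[].
  rewrite ltn_neqAle b_gt0 andbT eq_sym; apply/eqP => b1.
  by apply: not_pp; exists p, (logn p k); do 2!split => //; rewrite {1}kE b1 mul1n.
- by rewrite coprimeXl // coprime_sym.
- by rewrite mulnC.
Qed.

Lemma opposite_signs_lincomb_gt (a c u v : int) :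
  0 < a -> 0 < c -> u != 0 -> v != 0 -> `|u + v| = 1 ->
  a + c < `|a * u - c * v|.
Proof.
move=> ha hc hu hv huv.
have : (u <= -2 /\ 1 <= v \/ u <= -1 /\ 2 <= v) \/ (2 <= u /\ v <= -1 \/ 1 <= u /\ v <= -2).
  lia.
case=> [[]|[]] [u' v'].
all: nia.
Qed.

Lemma gcdz_neq1_of_dvd (d x y : int) :
  (1 < `|d|)%N -> (d %| x)%Z -> (d %| y)%Z -> gcdz x y != 1.
Proof.
move=> hd dx dy; apply/eqP => g.
have : (d %| gcdz x y)%Z by rewrite dvdz_gcd dx dy.
by rewrite g dvdz1 => /eqP; lia.
Qed.

Lemma dvdz_lincomb_coprime (a b y z : int) :
  coprimez a b -> (a %| a * y + b * z)%Z -> (a %| z)%Z.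
Proof.
move=> cop_ab dvd_sum.
rewrite -(Gauss_dvdzr _ cop_ab) (_ : b * z = a * y + b * z - a * y); last by ring.
by rewrite rpredB // dvdz_mulr.
Qed.

Lemma primitive_solution_abs_gt (a b s x y : int) :
  1 < a -> 1 < b -> 0 < s -> coprimez a b -> gcdz x y = 1 ->
  `|(a + b * s) * y + b * x| = a * b -> a + b * s < `|x|.
Proof.
move=> a_gt1 b_gt1 s_gt0 cop_ab gcd_xy.
set t := (a + b * s) * y + b * x => t_ab.
have ab_dvd_t : (a * b %| t)%Z.
  by rewrite dvdzE (_ : absz t = absz (a * b)) ?dvdnn //; lia.
have /dvdzP[v yE] : (b %| y)%Z.
  apply: (@dvdz_lincomb_coprime b (a + b * s) x y).
    by rewrite /coprimez (addrC a) mulrC gcdzMDl -/(coprimez b a) coprimez_sym.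
  by rewrite addrC; apply: dvdz_trans ab_dvd_t; apply: dvdz_mull.
have /dvdzP[u zE] : (a %| x + s * y)%Z.
  apply: (@dvdz_lincomb_coprime a b y); first exact: cop_ab.
  rewrite (_ : a * y + b * (x + s * y) = t); last by rewrite /t; ring.
  by apply: dvdz_trans ab_dvd_t; apply: dvdz_mulr.
have xE : x = a * u - b * s * v by rewrite -[x](addrK (s * y)) zE yE; ring.
have uv1 : `|u + v| = 1.
  have tE : t = a * b * (u + v) by rewrite /t xE yE; ring.
  by move: t_ab; rewrite tE normrM; nia.
have [u0|u_neq0] := eqVneq u 0.
  suff : gcdz x y != 1 by rewrite gcd_xy.
  apply: (@gcdz_neq1_of_dvd b); first by lia.
    by apply/dvdzP; exists (- s * v); rewrite xE u0; ring.
  by apply/dvdzP; exists v.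
have [v0|v_neq0] := eqVneq v 0.
  suff : gcdz x y != 1 by rewrite gcd_xy.
  apply: (@gcdz_neq1_of_dvd a); first by lia.
    by apply/dvdzP; exists u; rewrite xE v0; ring.
  by rewrite yE v0 mul0r dvdz0.
rewrite xE; apply: opposite_signs_lincomb_gt => //; first by lia.
by rewrite mulr_gt0 //; lia.
Qed.

Lemma isolated_vertex_of_coprime_factors (a b s : nat) :
  (1 < a)%N -> (1 < b)%N -> (0 < s)%N -> coprime a b ->
  isolated_in_Fkm (a * b) (a + b * s) (Posz (a + b * s), - Posz b).
Proof.
move=> a_gt1 b_gt1 s_gt0 cop_ab [x y] /eqP /= gcd_xy; rewrite /level /fdist /= => level_w dist.
have := @primitive_solution_abs_gt a b s x y.
rewrite gcd_xy /coprimez {1}/gcdz /= (eqP cop_ab).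
lia.
Qed.

Theorem proposition4p9 (k : nat) :
  (2 <= k)%N -> ~ prime_power k ->
  forall N : nat, exists m : nat, (N < m)%N /\
    exists v : int * int, is_vertex v /\ level v = m /\ isolated_in_Fkm k m v.
Proof.
move=> k_gt1 not_pp N.
have [a [b [a_gt1 b_gt1 cop_ab ->]]] := coprime_factors_of_non_prime_power _ k_gt1 not_pp.
exists (a + b * N.+1)%N; split; first by nia.
exists (Posz (a + b * N.+1), - Posz b); split; [|split].
- by rewrite /is_vertex /= gcdzN /gcdz /= addnC mulnC gcdnC gcdnMDl gcdnC.
- by rewrite /level /=; apply/maxn_idPl; nia.
- exact: isolated_vertex_of_coprime_factors.
Qed.
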